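(* Let $P,R\in\mathrm{Sym}(n,\mathbb{R})$ and $Q\in\mathrm{Mat}(n,\mathbb{R})$, let $B=\begin{bmatrix}P^{-1}&-P^{-1}Q\\-Q^TP^{-1}&Q^TP^{-1}Q-R\end{bmatrix}$ and $J=\begin{bmatrix}0&-I_n\\ I_n&0\end{bmatrix}$. If $\begin{bmatrix}P&Q\\Q^T&R\end{bmatrix}$ is positive definite, then $JB$ is hyperbolic.
   Context: A real matrix is hyperbolic if it has no eigenvalue on the imaginary axis. (Positive definiteness of the block matrix forces $P$ to be positive definite, hence invertible.) *)

From mathcomp Require Import all_boot all_order all_algebra.
From mathcomp Require Import complex.
Set Implicit Arguments. Unset Strict Implicit. Unset Printing Implicit Defensive.
Import Order.TTheory GRing.Theory Num.Theory.
Local Open Scope ring_scope.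

Definition symmx (R : rcfType) (n : nat) (A : 'M[R]_n) : Prop := A^T = A.

Definition posdef (R : rcfType) (n : nat) (A : 'M[R]_n) : Prop :=
  A^T = A /\ forall x : 'cV[R]_n, x != 0 -> 0 < (x^T *m A *m x) 0 0.

Definition hyperbolic (R : rcfType) (m : nat) (A : 'M[R]_m) : Prop :=
  forall z : R[i], eigenvalue (map_mx (real_complex R) A) z -> complex.Re z != 0.

Definition Jmx (R : rcfType) (n : nat) : 'M[R]_(n + n) :=
  block_mx 0 (- 1%:M) 1%:M 0.

Definition Bmx (R : rcfType) (n : nat) (P Q Rm : 'M[R]_n) : 'M[R]_(n + n) :=
  block_mx (invmx P) (- (invmx P *m Q))
           (- (Q^T *m invmx P)) (Q^T *m invmx P *m Q - Rm).

(* Let E = [[0, I], [I, 0]] and S = R - Q^T P^-1 Q (the Schur complement of P).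
   Then E (J B) = diag(P^-1, S) + K with K skew-symmetric, and the block
   elimination W = [[P^-1, -P^-1 Q], [0, I]] gives W^T [[P, Q], [Q^T, R]] W =
   diag(P^-1, S), so x |-> x^T E (J B) x is positive definite. If J B had an
   eigenvalue i w with eigenvector a + i b, then (J B) a = - w b and
   (J B) b = w a, and the symmetry of E makes the values of this form at a and
   at b sum to zero; hence a = b = 0. *)

From mathcomp Require Import all_boot all_order all_algebra.
From mathcomp Require Import complex.
Import Order.TTheory GRing.Theory Num.Theory.
Local Open Scope ring_scope.

Section PositiveDefinite.
Context {R : rcfType}.

Lemma posdef_unitmx {n} {A : 'M[R]_n} : posdef A -> A \in unitmx.
Proof.
move=> [_ Apos]; rewrite unitmxE unitfE; apply/det0P => -[v v0 vA].
have := Apos v^T; rewrite trmx_eq0 => /(_ v0).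
by rewrite trmxK vA mul0mx mxE ltxx.
Qed.

Lemma posdef_ulsub {n1 n2} {A : 'M[R]_n1} {B : 'M_(n1, n2)} {C D} :
  posdef (block_mx A B C D) -> posdef A.
Proof.
move=> [sym Mpos]; split.
  by move: sym; rewrite tr_block_mx => /eq_block_mx[].
move=> x x0; have := Mpos (col_mx x 0); rewrite col_mx_eq0 (negPf x0) => /(_ isT).
by rewrite tr_col_mx trmx0 mul_row_block !mul0mx !addr0 mul_row_col mulmx0 addr0.
Qed.

Lemma posdef_congr {n} {A : 'M[R]_n} (W : 'M[R]_n) :
  posdef A -> W \in unitmx -> posdef (W^T *m A *m W).
Proof.
move=> [sym Apos] Wu; split; first by rewrite !trmx_mul trmxK sym mulmxA.
move=> x x0; rewrite -!mulmxA mulmxA -trmx_mul mulmxA; apply: Apos.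
by apply: contra x0 => /eqP Wx0; rewrite -(mulKmx Wu x) Wx0 mulmx0.
Qed.

Lemma quad_skew_eq0 {n} {K : 'M[R]_n} (x : 'cV_n) :
  K^T = - K -> (x^T *m K *m x) 0 0 = 0.
Proof.
move=> skew; have : (x^T *m K *m x)^T = - (x^T *m K *m x).
  by rewrite !trmx_mul trmxK skew mulNmx mulmxN mulmxA.
move: (x^T *m K *m x) => q /(congr1 (fun M : 'M_1 => M 0 0)); rewrite !mxE => qN.
by have := mulrn_eq0 (q 0 0) 2; rewrite mulr2n {1}qN addNr eqxx => /esym/eqP.
Qed.

Lemma posdef_add_skew {n} {D K : 'M[R]_n} :
  posdef D -> K^T = - K ->
  forall x : 'cV_n, x != 0 -> 0 < (x^T *m (D + K) *m x) 0 0.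
Proof.
move=> [_ Dpos] skew x x0; rewrite mulmxDr mulmxDl.
have := quad_skew_eq0 x skew; move: (x^T *m K *m x) => k k0.
by rewrite [(_ + k) 0 0]mxE k0 addr0 Dpos.
Qed.

End PositiveDefinite.

Lemma lyapunov_pair_eq0 {R : numDomainType} {m} {A G : 'M[R]_m} {a b : 'cV_m} {w : R} :
  G^T = G -> (forall x : 'cV_m, x != 0 -> 0 < (x^T *m (G *m A) *m x) 0 0) ->
  A *m a = - w *: b -> A *m b = w *: a -> a = 0 /\ b = 0.
Proof.
move=> Gsym Gpos Aa Ab; pose q (x : 'cV_m) := (x^T *m (G *m A) *m x) 0 0.
have q_ge0 x : 0 <= q x.
  by have [->|/Gpos/ltW//] := eqVneq x 0; rewrite /q mulmx0 mxE.
have q_eq0 x : q x = 0 -> x = 0.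
  by move=> qx; apply/eqP/negP => /negP/Gpos; rewrite -/(q x) qx ltxx.
have Gba : b^T *m G *m a = (a^T *m G *m b)^T by rewrite !trmx_mul trmxK Gsym mulmxA.
have qab : q a + q b = 0.
  rewrite /q !mulmxA -(mulmxA _ A a) -(mulmxA _ A b) Aa Ab -!scalemxAr Gba.
  by move: (a^T *m G *m b) => c; rewrite !mxE mulNr addNr.
move/eqP: qab; rewrite paddr_eq0 //.
by move=> /andP[/eqP/q_eq0 -> /eqP/q_eq0 ->].
Qed.

Lemma col_eigenvector (F : fieldType) m (A : 'M[F]_m) z :
  eigenvalue A z -> exists2 v : 'cV_m, A *m v = z *: v & v != 0.
Proof.
move=> /eigenvalueP[u uA u0].
have : \det (A - z%:M) == 0.
  by apply/det0P; exists u; rewrite // mulmxBr uA mul_mx_scalar subrr.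
rewrite -det_tr => /det0P[v v0 /(congr1 trmx)].
rewrite trmx_mul trmxK trmx0 mulmxBl mul_scalar_mx => /eqP; rewrite subr_eq0 => /eqP.
by exists v^T; rewrite // trmx_eq0.
Qed.

Section ComplexMatrices.
Context {R : rcfType}.
Local Notation toC := (map_mx (real_complex R)).

Definition cplx_mx {m k} (a b : 'M[R]_(m, k)) : 'M[R[i]]_(m, k) :=
  toC a + 'i%C *: toC b.

Lemma cplx_mx_ReIm {m k} (v : 'M[R[i]]_(m, k)) :
  v = cplx_mx (map_mx (@complex.Re R) v) (map_mx (@complex.Im R) v).
Proof. by apply/matrixP => i j; rewrite !mxE -complexE. Qed.

Lemma Re_cplx_mx {m k} (a b : 'M[R]_(m, k)) : map_mx (@complex.Re R) (cplx_mx a b) = a.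
Proof. by apply/matrixP => i j; rewrite !mxE /= mul0r mulr0 subr0 addr0. Qed.

Lemma Im_cplx_mx {m k} (a b : 'M[R]_(m, k)) : map_mx (@complex.Im R) (cplx_mx a b) = b.
Proof. by apply/matrixP => i j; rewrite !mxE /= mul0r mul1r !add0r. Qed.

Lemma cplx_mx_inj {m k} (a b a' b' : 'M[R]_(m, k)) :
  cplx_mx a b = cplx_mx a' b' -> a = a' /\ b = b'.
Proof.
move=> e; split.
  by rewrite -(Re_cplx_mx a b) e Re_cplx_mx.
by rewrite -(Im_cplx_mx a b) e Im_cplx_mx.
Qed.

Lemma mul_cplx_mx {m k p} (A : 'M[R]_(m, k)) (a b : 'M[R]_(k, p)) :
  toC A *m cplx_mx a b = cplx_mx (A *m a) (A *m b).
Proof. by rewrite mulmxDr -scalemxAr -!map_mxM. Qed.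

Lemma scale_i_cplx_mx {m k} (w : R) (a b : 'M[R]_(m, k)) :
  ('i * w%:C)%C *: cplx_mx a b = cplx_mx (- w *: b) (w *: a).
Proof.
rewrite /cplx_mx scalerDr !scalerA !map_mxZ !scalerA addrC rmorphN; congr (_ + _).
by rewrite mulrAC -expr2 sqr_i mulN1r.
Qed.

Lemma hyperbolic_of_lyapunov {m} {A G : 'M[R]_m} :
  G^T = G -> (forall x : 'cV_m, x != 0 -> 0 < (x^T *m (G *m A) *m x) 0 0) ->
  hyperbolic A.
Proof.
move=> Gsym Gpos z /col_eigenvector[v Av v0]; apply/negP => /eqP Re0.
have zi : z = ('i * (complex.Im z)%:C)%C by rewrite {1}[z]complexE Re0 add0r.
move: Av v0; rewrite [v]cplx_mx_ReIm zi mul_cplx_mx scale_i_cplx_mx.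
move=> /cplx_mx_inj[Aa Ab]; have [-> ->] := lyapunov_pair_eq0 Gsym Gpos Aa Ab.
by rewrite /cplx_mx !map_mx0 scaler0 addr0 eqxx.
Qed.

End ComplexMatrices.

Definition swapmx (R : pzRingType) n : 'M[R]_(n + n) := block_mx 0 1%:M 1%:M 0.

Lemma swapmx_sym (R : pzRingType) n : (swapmx R n)^T = swapmx R n.
Proof. by rewrite /swapmx tr_block_mx trmx1 trmx0. Qed.

Section HamiltonianBlock.
Context {R : rcfType} {n : nat} (P Q Rm : 'M[R]_n).

Definition schur_compl := Rm - Q^T *m invmx P *m Q.
Definition schur_mx : 'M[R]_(n + n) := block_mx (invmx P) (- (invmx P *m Q)) 0 1%:M.
Definition skew_part : 'M[R]_(n + n) :=
  block_mx 0 (- (invmx P *m Q)) (Q^T *m invmx P) 0.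

Lemma swapmx_JB_split : swapmx R n *m (Jmx R n *m Bmx P Q Rm) =
  block_mx (invmx P) 0 0 schur_compl + skew_part.
Proof.
rewrite /swapmx /Jmx /Bmx /schur_compl /skew_part !mulmx_block add_block_mx.
by rewrite !mul0mx !mul1mx !mulNmx !mul1mx !opprK !(add0r, addr0) opprB.
Qed.

Lemma schur_mx_unit : P \in unitmx -> schur_mx \in unitmx.
Proof. by move=> Pu; rewrite unitmxE det_ublock det1 mulr1 -unitmxE unitmx_inv. Qed.

Hypothesis sP : P^T = P.

Lemma skew_partT : skew_part^T = - skew_part.
Proof.
rewrite /skew_part tr_block_mx !trmx0 !trmx_mul linearN /= trmx_mul trmx_inv sP trmxK.
by rewrite opp_block_mx !oppr0 opprK.
Qed.

Lemma schur_congruence : P \in unitmx ->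
  schur_mx^T *m block_mx P Q Q^T Rm *m schur_mx = block_mx (invmx P) 0 0 schur_compl.
Proof.
move=> Pu; rewrite /schur_mx /schur_compl tr_block_mx trmx0 trmx1 linearN /= trmx_mul trmx_inv sP.
rewrite !mulmx_block mulVmx // mulNmx -(mulmxA _ _ P) mulVmx //.
rewrite !(mul0mx, mulmx0, mul1mx, mulmx1, add0r, addr0) !addNr !mul0mx add0r.
by rewrite mulNmx addrC.
Qed.

End HamiltonianBlock.

Theorem corollary2p2 (R : rcfType) (n : nat) (P Q Rm : 'M[R]_n) :
  symmx P -> symmx Rm ->
  posdef (block_mx P Q Q^T Rm) ->
  hyperbolic (Jmx R n *m Bmx P Q Rm).
Proof.
(* Both symmetry hypotheses are implied by the positive definiteness. *)
move=> _ _ pd; have Ppd := posdef_ulsub pd.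
have [sP _] := Ppd; have Pu := posdef_unitmx Ppd.
apply: (hyperbolic_of_lyapunov (swapmx_sym R n)).
rewrite swapmx_JB_split; apply: posdef_add_skew (skew_partT P Q sP).
rewrite -(schur_congruence P Q Rm sP Pu).
exact: posdef_congr _ pd (schur_mx_unit P Q Pu).
Qed.
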